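(* Let $G$ be a finite simple connected graph without isolated vertices. Then Dom has a winning strategy in the Sepy-start Disjoint Domination Game on $G$ even when Sepy is allowed to pass at any time except in the first move of the game (Dom not passing).
   Context: For a vertex $v$, $N[v]$ denotes its closed neighborhood. The Disjoint Domination Game on an isolate-free graph $G$ is played by Dom and Sepy with colors $p$ and $b$; $V_p,V_b$ denote the current sets of vertices of each color. Players alternate; either player may use either color. A move chooses a vertex $v$ and a color $c$ such that (i) $v$ is uncolored and (ii) some $u\in N[v]$ satisfies $N[u]\cap V_c=\emptyset$ (before the move); then $v$ gets color $c$. In this variant Sepy may pass instead of moving on any of his turns except the first move of the game, which is Sepy's. The game ends as soon as either (s* ) some vertex $v$ has $N[v]\subseteq V_p$ or $N[v]\subseteq V_b$ — Sepy wins; or (d* ) both $V_p$ and $V_b$ are dominating sets of $G$ — Dom wins. *)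

From mathcomp Require Import all_boot.
Set Implicit Arguments. Unset Strict Implicit. Unset Printing Implicit Defensive.

(* A simple graph: vertex type T : finType, adjacency e : rel T
   (symmetric, irreflexive; hypotheses in the theorem).
   Colors: true = p, false = b.  A game position is a partial coloring
   f : {ffun T -> option bool} (None = uncolored). *)

Section Game.
Variables (T : finType) (e : rel T).

Definition cnbh (v : T) : {set T} := [set u | (u == v) || e v u].

Definition coloring := {ffun T -> option bool}.

Definition empty_coloring : coloring := [ffun _ => None].

Definition Vcol (f : coloring) (c : bool) : {set T} := [set x | f x == Some c].

Definition dominating (D : {set T}) : Prop :=
  forall v : T, exists2 u, u \in cnbh v & u \in D.

Definition sepy_wins_now (f : coloring) : Prop :=
  exists v : T, exists c : bool, cnbh v \subset Vcol f c.

Definition dom_wins_now (f : coloring) : Prop :=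
  dominating (Vcol f true) /\ dominating (Vcol f false).

Definition legal (f : coloring) (v : T) (c : bool) : Prop :=
  f v = None /\ exists2 u, u \in cnbh v & cnbh u :&: Vcol f c = set0.

Definition play (f : coloring) (v : T) (c : bool) : coloring :=
  [ffun x => if x == v then Some c else f x].

(* Whose turn: Dom, or Sepy (with flag: whether Sepy may pass). *)
Inductive turn := DomTurn | SepyTurn of bool.

(* dom_wins t f : from position f with t to move, Dom has a strategy that
   forces the game to end with (d-star) (the game is finite: Dom never passes
   and every Dom move colors a new vertex, so the least fixed point
   captures exactly "Dom has a winning strategy"). *)
Inductive dom_wins : turn -> coloring -> Prop :=
| dw_end t f :
    ~ sepy_wins_now f -> dom_wins_now f -> dom_wins t f
| dw_dom f v c :
    ~ sepy_wins_now f -> ~ dom_wins_now f ->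
    legal f v c -> dom_wins (SepyTurn true) (play f v c) -> dom_wins DomTurn f
| dw_sepy (may_pass : bool) f :
    ~ sepy_wins_now f -> ~ dom_wins_now f ->
    (forall v c, legal f v c -> dom_wins DomTurn (play f v c)) ->
    (may_pass -> dom_wins DomTurn f) ->
    dom_wins (SepyTurn may_pass) f.

End Game.

(* Dom maintains the invariant that, whenever Sepy is to move, every coloured
   vertex is saturated; then no neighbourhood of a coloured vertex is
   monochromatic, and an uncoloured vertex lies in its own neighbourhood, so
   Sepy cannot have won.  A Sepy move at v can only leave v unsaturated, and
   Dom repairs this by giving the missing colour to an uncoloured vertex of
   N[v] (one exists, since N[v] is not monochromatic).  If instead Sepy passes
   or v is already saturated and the game is not over, some N[u] misses a
   colour d; following a path from u to a coloured vertex, Dom finds an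
   uncoloured vertex b next to a vertex a whose neighbourhood misses the
   colour Dom plays at b, and b becomes saturated.  Every move colours a
   vertex, so the game ends, and only with Dom's win. *)

From Stdlib Require Import Classical.
From mathcomp Require Import all_boot.

Set Implicit Arguments. Unset Strict Implicit. Unset Printing Implicit Defensive.

Section DisjointDominationGame.
Variables (T : finType) (e : rel T).
Implicit Types (f : coloring T) (c d : bool) (a b u v w x y z : T).

Definition saturated f z : Prop := forall c, exists2 u, u \in cnbh e z & f u = Some c.
Definition avoids f w c : Prop := forall y, y \in cnbh e w -> f y <> Some c.
Definition all_saturated f : Prop := forall z, f z != None -> saturated f z.
Definition saturated_except f x : Prop :=
  forall z, f z != None -> z != x -> saturated f z.
Definition uncolored f : {set T} := [set z | f z == None].

Lemma cnbh_refl v : v \in cnbh e v.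
Proof. by rewrite inE eqxx. Qed.

Lemma play_at f v c : play f v c v = Some c.
Proof. by rewrite ffunE eqxx. Qed.

Lemma play_other f v c x : x != v -> play f v c x = f x.
Proof. by move=> xv; rewrite ffunE (negbTE xv). Qed.

Lemma card_uncolored_play f v c :
  f v = None -> #|uncolored (play f v c)| < #|uncolored f|.
Proof.
move=> fv; apply/proper_card/properP; split.
  by apply/subsetP => z; rewrite !inE ffunE; case: (z == v).
by exists v; rewrite !inE ?play_at ?fv.
Qed.

Lemma legalP f v c :
  legal e f v c <-> f v = None /\ exists2 w, w \in cnbh e v & avoids f w c.
Proof.
split=> -[fv [w vw hw]]; split=> //; exists w => //.
  move=> y wy fy; have : y \in cnbh e w :&: Vcol f c by rewrite in_setI wy inE fy eqxx.
  by rewrite hw inE.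
apply/setP => y; rewrite in_setI in_set0; apply/negbTE/andP => -[wy].
by rewrite inE => /eqP; apply: hw.
Qed.

Lemma saturated_bichromatic f z u1 u2 c :
  u1 \in cnbh e z -> f u1 = Some c -> u2 \in cnbh e z -> f u2 = Some (~~ c) ->
  saturated f z.
Proof.
move=> zu1 fu1 zu2 fu2 d; case: (eqVneq d c) => [->|dc]; first by exists u1.
by exists u2; rewrite // fu2; case: c d dc {fu1 fu2} => [] [].
Qed.

Lemma saturated_play f v c z :
  f v = None -> saturated f z -> saturated (play f v c) z.
Proof.
move=> fv sat d; have [u zu fu] := sat d; exists u => //.
by rewrite play_other //; apply: contra_eq_neq fu => ->; rewrite fv.
Qed.

Lemma saturated_not_monochromatic f z c :
  saturated f z -> ~ cnbh e z \subset Vcol f c.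
Proof.
move=> sat /subsetP mono; have [u zu fu] := sat (~~ c).
by have := mono u zu; rewrite inE fu; case: c {fu mono}.
Qed.

Lemma all_saturated_no_sepy_win f : all_saturated f -> ~ sepy_wins_now e f.
Proof.
move=> sat [v [c mono]]; have : f v != None.
  by have := subsetP mono v (cnbh_refl v); rewrite inE => /eqP ->.
by move=> /sat /(saturated_not_monochromatic (c := c)) /(_ mono).
Qed.

Lemma all_saturated_play f y c :
  f y = None -> saturated (play f y c) y ->
  (forall z, f z != None -> saturated (play f y c) z) ->
  all_saturated (play f y c).
Proof.
move=> fy sat_y sat z; case: (eqVneq z y) => [-> //|zy].
by rewrite play_other //; apply: sat.
Qed.

Lemma not_dom_wins_now_avoids f : ~ dom_wins_now e f -> exists u d, avoids f u d.
Proof.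
move=> not_dom; have [d not_dominating] : exists d, ~ dominating e (Vcol f d).
  apply: NNPP => H; apply: not_dom; split; apply: NNPP => ?; apply: H; eauto.
have [u hu] := not_all_ex_not _ _ not_dominating.
by exists u, d => y uy fy; apply: hu; exists y; rewrite // inE fy.
Qed.

Lemma connect_boundary (P : pred T) x y :
  connect e x y -> P x -> ~~ P y -> exists a b, [/\ e a b, P a & ~~ P b].
Proof.
move=> /connectP [p]; elim: p x => [|z p IH] x /=; first by move=> _ -> Px; rewrite Px.
move=> /andP [xz xp] ey Px Py; case Pz: (P z); first exact: IH xp ey Pz Py.
by exists x, z; rewrite Pz.
Qed.

Section Strategy.
Hypotheses (e_sym : symmetric e) (e_irr : irreflexive e).
Hypotheses (e_connected : forall x y, connect e x y)
           (no_isolated : forall v, exists u, e v u).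

Lemma cnbh_sym u v : (u \in cnbh e v) = (v \in cnbh e u).
Proof. by rewrite !inE eq_sym e_sym. Qed.

Lemma repair_move f x c :
  ~ sepy_wins_now e f -> f x = Some c -> ~ saturated f x -> saturated_except f x ->
  exists y d, legal e f y d /\ all_saturated (play f y d).
Proof.
move=> no_sepy fx unsat sat_except.
have avoid : avoids f x (~~ c).
  by move=> y xy fy; apply: unsat; apply: saturated_bichromatic (cnbh_refl x) fx xy fy.
have [y /andP [xy /eqP fy]|all_colored] := pickP [pred y in cnbh e x | f y == None].
  have yx : y != x by apply: contra_eq_neq fy => ->; rewrite fx.
  have sat_xy z : z \in [set x; y] -> saturated (play f y (~~ c)) z.
    rewrite !inE => /orP [] /eqP ->.
      apply: (saturated_bichromatic (cnbh_refl x) _ xy (play_at _ _ _)).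
      by rewrite play_other 1?eq_sym.
    have yx' : x \in cnbh e y by rewrite cnbh_sym.
    apply: (saturated_bichromatic yx' _ (cnbh_refl y) (play_at _ _ _)).
    by rewrite play_other 1?eq_sym.
  exists y, (~~ c); split; first by apply/legalP; split=> //; exists x; rewrite // cnbh_sym.
  apply: all_saturated_play => //; first by apply: sat_xy; rewrite !inE eqxx orbT.
  move=> z fz; case: (eqVneq z x) => [->|zx]; first by apply: sat_xy; rewrite !inE eqxx.
  exact/saturated_play/sat_except.
case: no_sepy; exists x, c; apply/subsetP => y xy; rewrite inE.
have := all_colored y; rewrite /= xy /=; case fy: (f y) => [d|] // _.
by have := avoid y xy; rewrite fy; case: c d {fx avoid fy} => [] [] // /(_ erefl).
Qed.

Lemma saturating_move_at f a b x1 c :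
  all_saturated f -> f b = None -> a \in cnbh e b -> x1 \in cnbh e b ->
  f x1 = Some c -> avoids f a (~~ c) ->
  legal e f b (~~ c) /\ all_saturated (play f b (~~ c)).
Proof.
move=> sat fb ba bx1 fx1 avoid; split; first by apply/legalP; split=> //; exists a.
have x1b : x1 != b by apply: contra_eq_neq fx1 => ->; rewrite fb.
apply: all_saturated_play => //.
  apply: (saturated_bichromatic bx1 _ (cnbh_refl b) (play_at _ _ _)).
  by rewrite play_other.
by move=> z /sat; apply: saturated_play.
Qed.

Lemma extend_move f x :
  all_saturated f -> ~ dom_wins_now e f -> f x != None ->
  exists y d, legal e f y d /\ all_saturated (play f y d).
Proof.
move=> sat not_dom fx; have [u [d avoid]] := not_dom_wins_now_avoids not_dom.
have fu : f u = None.
  apply/eqP; apply: contraT => /sat /(_ d) [w uw fw]; case: (avoid w uw fw).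
have [w /andP [uw]|uncolored_nbh] := pickP [pred w in cnbh e u | f w != None].
  case fw: (f w) => [c|] // _.
  have cd : c = ~~ d.
    by move: (avoid w uw); rewrite fw; case: c d {fw avoid} => [] [] // /(_ erefl).
  exists u, (~~ c); apply: (saturating_move_at sat fu (cnbh_refl u) uw fw).
  by rewrite cd negbK.
pose P := [pred v | [forall w in cnbh e v, f w == None]].
have Pu : P u.
  by apply/forall_inP => w uw; have := uncolored_nbh w; rewrite /= uw => /negbT /negPn.
have nPx : ~~ P x by apply: contra fx => /forall_inP; apply; apply: cnbh_refl.
have [a [b [ab Pa]]] := connect_boundary (e_connected u x) Pu nPx.
rewrite negb_forall_in => /exists_inP [x1 bx1]; case fx1: (f x1) => [c|] // _.
have ba : b \in cnbh e a by rewrite inE ab orbT.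
have fb : f b = None by apply/eqP; move/forall_inP: Pa; apply.
have ab' : a \in cnbh e b by rewrite cnbh_sym.
exists b, (~~ c); apply: (saturating_move_at sat fb ab' bx1 fx1).
by move=> y ay; move/forall_inP: Pa => /(_ y ay) /eqP ->.
Qed.

Lemma dom_response f x :
  ~ sepy_wins_now e f -> ~ dom_wins_now e f -> f x != None -> saturated_except f x ->
  exists y d, legal e f y d /\ all_saturated (play f y d).
Proof.
move=> no_sepy not_dom fx sat_except; case: (classic (saturated f x)) => sat_x.
  apply: (extend_move _ not_dom fx) => z fz.
  by case: (eqVneq z x) => [-> //|]; apply: sat_except.
by move: fx; case fx: (f x) => [c|] // _; apply: repair_move fx sat_x sat_except.
Qed.

Lemma sepy_move_safe f v c :
  all_saturated f -> legal e f v c -> ~ sepy_wins_now e (play f v c).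
Proof.
move=> sat /legalP [fv [w vw avoid]] [u [c' /subsetP mono]].
have play_mono y : y \in cnbh e u -> play f v c y = Some c'.
  by move=> uy; have := mono y uy; rewrite inE => /eqP.
case: (eqVneq u v) => [uv|uv]; last first.
  have fu : f u != None by rewrite -(play_other _ c uv) play_mono ?cnbh_refl.
  apply: (saturated_not_monochromatic (c := c') (saturated_play c fv (sat u fu))).
  by apply/subsetP.
subst u; have cc' : c' = c by have := play_mono v (cnbh_refl v); rewrite play_at => -[].
have [y [vy wy yv]] : exists y, [/\ y \in cnbh e v, y \in cnbh e w & y != v].
  case: (eqVneq w v) => [->|wv]; last by exists w; rewrite cnbh_refl.
  have [y vy] := no_isolated v.
  have yv : y != v by apply: contraTneq vy => ->; rewrite e_irr.
  by exists y; rewrite !inE vy orbT.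
by apply: (avoid y wy); rewrite -(play_other _ c yv) play_mono // cc'.
Qed.

Lemma dom_turn_wins f x :
  ~ sepy_wins_now e f -> f x != None -> saturated_except f x ->
  (forall y d, f y = None -> all_saturated (play f y d) ->
     dom_wins e (SepyTurn true) (play f y d)) ->
  dom_wins e DomTurn f.
Proof.
move=> no_sepy fx sat_except next.
case: (classic (dom_wins_now e f)) => dom_now; first exact: dw_end.
have [y [d [legal_yd sat]]] := dom_response no_sepy dom_now fx sat_except.
have [fy _] := (legalP _ _ _).1 legal_yd.
exact: dw_dom no_sepy dom_now legal_yd (next y d fy sat).
Qed.

Lemma sepy_turn_wins (may_pass : bool) f :
  all_saturated f -> (may_pass -> exists z, f z != None) ->
  dom_wins e (SepyTurn may_pass) f.
Proof.
have [n] := ubnP #|uncolored f|; elim: n may_pass f => // n IH may_pass f size_f.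
move=> sat colored; have no_sepy := all_saturated_no_sepy_win sat.
case: (classic (dom_wins_now e f)) => dom_now; first exact: dw_end.
have next g y d : #|uncolored g| <= #|uncolored f| -> g y = None ->
    all_saturated (play g y d) -> dom_wins e (SepyTurn true) (play g y d).
  move=> le_gf gy sat'; apply: IH sat' _ => [|_]; last by exists y; rewrite play_at.
  exact: leq_trans (card_uncolored_play d gy) (leq_trans le_gf _).
apply: dw_sepy => // [v c legal_vc|/colored [x fx]].
  have fv : f v = None by case/legalP: legal_vc.
  apply: (dom_turn_wins (x := v) (sepy_move_safe sat legal_vc)).
  - by rewrite play_at.
  - move=> z fz zv; apply: saturated_play fv (sat z _).
    by rewrite -(play_other _ c zv).
  - by move=> y d; apply: next; apply/ltnW/card_uncolored_play.
apply: (dom_turn_wins no_sepy fx) => [z fz _|y d]; first exact: sat.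
exact: next.
Qed.

End Strategy.
End DisjointDominationGame.

Theorem mainTheorem8 (T : finType) (e : rel T) :
  symmetric e -> irreflexive e ->
  (forall x y : T, connect e x y) ->
  (forall v : T, exists u : T, e v u) ->
  dom_wins e (SepyTurn false) (empty_coloring T).
Proof.
move=> e_sym e_irr e_connected no_isolated.
by apply: sepy_turn_wins => // z; rewrite ffunE.
Qed.
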